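(* Let $f_1,f_2:\mathbb{R}^n\to[-\infty,\infty]$ be proper nearly convex functions with $\operatorname{ri}(\operatorname{dom} f_1)\cap\operatorname{ri}(\operatorname{dom} f_2)\neq\emptyset$. Then $(f_1+f_2)^*(w)=(f_1^*\square f_2^* )(w)$ for all $w\in\mathbb{R}^n$. Moreover, if $(f_1+f_2)^*(w)\in\mathbb{R}$, there exist $w_1,w_2\in\mathbb{R}^n$ with $w=w_1+w_2$ and $(f_1+f_2)^*(w)=f_1^*(w_1)+f_2^*(w_2)$.
   Context: A set $\Omega$ is nearly convex if there is a convex set $C$ with $C\subset\Omega\subset\overline{C}$; $\operatorname{ri}\Omega=\{a\in\Omega:\exists\delta>0,\ B(a;\delta)\cap\operatorname{aff}\Omega\subset\Omega\}$. A function $f$ is nearly convex if $\operatorname{epi}f=\{(x,\lambda):f(x)\le\lambda\}$ is nearly convex, proper if $\operatorname{dom}f=\{f<\infty\}\neq\emptyset$ and $f>-\infty$. Fenchel conjugate: $f^*(w)=\sup_x\{\langle w,x\rangle-f(x)\}$. Infimal convolution: $(g\square h)(w)=\inf\{g(w_1)+h(w_2):w_1+w_2=w\}$. *)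

From mathcomp Require Import all_boot all_order all_algebra.
From mathcomp Require Import all_classical all_reals all_analysis.
Set Implicit Arguments. Unset Strict Implicit. Unset Printing Implicit Defensive.
Import Order.TTheory GRing.Theory Num.Theory.
Import numFieldNormedType.Exports.
Local Open Scope classical_set_scope.
Local Open Scope ring_scope.

Section Defs.
Variables (R : realType) (n : nat).

Definition dotp (u v : 'rV[R]_n) : R := \sum_(i < n) u 0 i * v 0 i.

Definition enorm (u : 'rV[R]_n) : R := Num.sqrt (dotp u u).
Definition eball (a : 'rV[R]_n) (d : R) : set 'rV[R]_n :=
  [set x | enorm (x - a) < d].

Definition affine_set (A : set 'rV[R]_n) : Prop :=
  forall x y (t : R), A x -> A y -> A ((1 - t) *: x + t *: y).
Definition aff (A : set 'rV[R]_n) : set 'rV[R]_n :=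
  \bigcap_(B in [set B | affine_set B /\ A `<=` B]) B.

Definition ri (O : set 'rV[R]_n) : set 'rV[R]_n :=
  [set a | O a /\ exists d : R, 0 < d /\ eball a d `&` aff O `<=` O].

Definition dom (f : 'rV[R]_n -> \bar R) : set 'rV[R]_n :=
  [set x | (f x < +oo)%E].
Definition epi (f : 'rV[R]_n -> \bar R) : set ('rV[R]_n * R) :=
  [set p | (f p.1 <= p.2%:E)%E].

Definition nearly_convex_set (O : set 'rV[R]_n) : Prop :=
  exists C : set (convex_lmodType 'rV[R]_n),
    convex_set C /\ C `<=` O /\ O `<=` closure (C : set 'rV[R]_n).
Definition nearly_convex_fun (f : 'rV[R]_n -> \bar R) : Prop :=
  exists C : set (convex_lmodType ('rV[R]_n * R)%type),
    convex_set C /\ C `<=` epi f /\ epi f `<=` closure (C : set ('rV[R]_n * R)).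

Definition proper_fun (f : 'rV[R]_n -> \bar R) : Prop :=
  dom f !=set0 /\ forall x, (-oo < f x)%E.

Definition fconj (f : 'rV[R]_n -> \bar R) (w : 'rV[R]_n) : \bar R :=
  ereal_sup [set ((dotp w x)%:E - f x)%E | x in [set: 'rV[R]_n]].

Definition infconv (g h : 'rV[R]_n -> \bar R) (w : 'rV[R]_n) : \bar R :=
  ereal_inf [set (g p.1 + h p.2)%E | p in [set p : 'rV[R]_n * 'rV[R]_n | p.1 + p.2 = w]].

End Defs.

From mathcomp Require Import all_boot all_order all_algebra.
From mathcomp Require Import all_classical all_reals all_analysis.
From mathcomp Require Import ring lra.
Set Implicit Arguments. Unset Strict Implicit. Unset Printing Implicit Defensive.
Import Order.TTheory GRing.Theory Num.Theory.
Import numFieldNormedType.Exports.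
Local Open Scope classical_set_scope.
Local Open Scope ring_scope.

(* The inequality (f1 + f2)^* <= f1^* [] f2^* is the Fenchel-Young inequality
   and holds for arbitrary proper functions.  For the converse fix w with
   (f1 + f2)^*(w) <= a, and choose convex sets C1, C2 squeezed between the
   epigraphs of f1, f2 and their closures.  The convex set
     K = {(z - x, m1 + m2 - <w, x>) | (x, m1) in C1, (z, m2) in C2}
   lies above height -a on the vertical axis, and since the domains share a
   relative interior point x0, every horizontal vector of K has a negative
   multiple which is again horizontal in K.  A coordinate-by-coordinate
   Hahn-Banach argument then gives a slope y with -a + <y, p.1> <= p.2 on K;
   passing to closures yields f1^*(w - y) + f2^*(y) <= a, so the infimal
   convolution is attained at (w - y, y). *)

Definition segment_closed {R : numDomainType} {V : lmodType R} (D : set V) :=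
  forall a b (t : R), 0 <= t -> t <= 1 -> D a -> D b -> D (t *: a + (1 - t) *: b).

Lemma convex_segment_closed {R : realType} (V : lmodType R)
    (C : set (convex_lmodType V)) :
  convex_set C -> segment_closed (C : set V).
Proof.
move=> cC a b t t0 t1 Ca Cb.
by have := cC a b (Itv01 t0 t1); rewrite !inE => /(_ Ca Cb).
Qed.

Section DotProduct.
Variables (R : realType) (n : nat).
Implicit Types (u v x : 'rV[R]_n).

Lemma dotpDl u v x : dotp (u + v) x = dotp u x + dotp v x.
Proof. by rewrite /dotp -big_split /=; apply: eq_bigr => i _; rewrite mxE mulrDl. Qed.

Lemma dotpZl (c : R) u x : dotp (c *: u) x = c * dotp u x.
Proof. by rewrite /dotp mulr_sumr; apply: eq_bigr => i _; rewrite mxE mulrA. Qed.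

Lemma dotpC u x : dotp u x = dotp x u.
Proof. by apply: eq_bigr => i _; rewrite mulrC. Qed.

Lemma dotpDr u v x : dotp x (u + v) = dotp x u + dotp x v.
Proof. by rewrite !(dotpC x) dotpDl. Qed.

Lemma dotpZr (c : R) u x : dotp x (c *: u) = c * dotp x u.
Proof. by rewrite !(dotpC x) dotpZl. Qed.

Lemma dotpNl u x : dotp (- u) x = - dotp u x.
Proof. by rewrite -scaleN1r dotpZl mulN1r. Qed.

Lemma dotpBl u v x : dotp (u - v) x = dotp u x - dotp v x.
Proof. by rewrite dotpDl dotpNl. Qed.

Lemma dotpBr u v x : dotp x (u - v) = dotp x u - dotp x v.
Proof. by rewrite !(dotpC x) dotpBl. Qed.

Lemma dotp_delta (j : 'I_n) x : dotp (delta_mx 0 j) x = x 0 j.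
Proof.
rewrite /dotp (bigD1 j) //= big1 ?addr0; first by rewrite mxE !eqxx mul1r.
by move=> i /negPf ij; rewrite mxE ij andbF mul0r.
Qed.

End DotProduct.

Section L1Norm.
Variables (R : realType) (n : nat).
Implicit Types (u v : 'rV[R]_n).

(* The l1 norm: it dominates the Euclidean norm and is the convenient
   norm for estimating linear combinations coordinatewise. *)
Definition l1 u : R := \sum_i `|u 0 i|.

Lemma l1_ge0 u : 0 <= l1 u.
Proof. exact: sumr_ge0. Qed.

Lemma l1D u v : l1 (u + v) <= l1 u + l1 v.
Proof. by rewrite /l1 -big_split /=; apply: ler_sum => i _; rewrite mxE ler_normD. Qed.

Lemma l1Z (c : R) u : l1 (c *: u) = `|c| * l1 u.
Proof. by rewrite /l1 mulr_sumr; apply: eq_bigr => i _; rewrite mxE normrM. Qed.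

Lemma l1_sum (I : Type) (r : seq I) (F : I -> 'rV[R]_n) :
  l1 (\sum_(i <- r) F i) <= \sum_(i <- r) l1 (F i).
Proof.
elim/big_rec2: _ => [|i a b _ h]; first by rewrite /l1 big1 // => i _; rewrite mxE normr0.
by apply: le_trans (l1D _ _) _; rewrite lerD2l.
Qed.

Lemma sum_sqr_le (I : Type) (r : seq I) (F : I -> R) :
  (forall i, 0 <= F i) -> \sum_(i <- r) F i ^+ 2 <= (\sum_(i <- r) F i) ^+ 2.
Proof.
move=> F0; elim: r => [|a r IH]; first by rewrite !big_nil expr0n.
rewrite !big_cons; have := F0 a; have : 0 <= \sum_(i <- r) F i by apply: sumr_ge0.
nra.
Qed.

Lemma enorm_le_l1 u : enorm u <= l1 u.
Proof.
rewrite /enorm -(ger0_norm (l1_ge0 u)) -sqrtr_sqr; apply: ler_wsqrtr.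
apply: (@le_trans _ _ (\sum_i `|u 0 i| ^+ 2)); last exact: sum_sqr_le.
by apply: ler_sum => i _; rewrite real_normK ?num_real // expr2.
Qed.

Lemma dotp_le_l1 u v (d : R) : (forall i, `|v 0 i| <= d) -> `|dotp u v| <= l1 u * d.
Proof.
move=> vd; rewrite /dotp /l1 mulr_suml.
apply: le_trans (ler_norm_sum _ _ _) _; apply: ler_sum => i _.
by rewrite normrM ler_wpM2l.
Qed.

Lemma l1_mulmx_le (k : nat) (c : 'rV[R]_k) (B : 'M[R]_(k, n)) (r : R) :
  (forall i, `|c 0 i| <= r) -> l1 (c *m B) <= r * \sum_i l1 (row i B).
Proof.
move=> cr; rewrite mulmx_sum_row mulr_sumr.
apply: (le_trans (l1_sum _ _)); apply: ler_sum => i _.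
by rewrite l1Z ler_wpM2r ?l1_ge0.
Qed.

(* The canonical matrix norm is the max-norm of the entries. *)
Lemma entry_le_mx_norm (k m : nat) (M : 'M[R]_(k, m)) i j : `|M i j| <= `|M|.
Proof. by rewrite [X in _ <= X]mx_normrE; apply: (le_trans _ (le_bigmax _ _ (i, j))). Qed.

Lemma mulmx_coord_le (k : nat) (v : 'rV[R]_n) (P : 'M[R]_(n, k)) i :
  `|(v *m P) 0 i| <= l1 v * `|P|.
Proof.
rewrite mxE /l1 mulr_suml; apply: le_trans (ler_norm_sum _ _ _) _.
by apply: ler_sum => j _; rewrite normrM ler_wpM2l ?entry_le_mx_norm.
Qed.

End L1Norm.

Section Approximation.
Variables (R : realType) (n : nat).

Lemma closure_approx_l1 (D : set 'rV[R]_n) y (e : R) :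
  closure D y -> 0 < e -> exists q, D q /\ l1 (q - y) < e.
Proof.
move=> cy e0; pose e' := e / n.+1%:R.
have e'0 : 0 < e' by rewrite divr_gt0 // ltr0Sn.
have [q [Dq]] := cy _ (nbhsx_ballx y e' e'0); rewrite -ball_normE /= => yq.
exists q; split => //; apply: (@le_lt_trans _ _ (\sum_(i < n) e')).
  apply: ler_sum => i _; apply/ltW/(le_lt_trans _ yq).
  by have := entry_le_mx_norm (y - q) 0 i; rewrite !mxE distrC.
rewrite sumr_const card_ord -mulr_natr -mulrA gtr_pMr // mulrC.
by rewrite ltr_pdivrMr ?ltr0Sn // mul1r ltr_nat.
Qed.

Lemma closure_affine_minorant (C : set ('rV[R]_n * R)) (u : 'rV[R]_n) (c : R) p :
  (forall q, C q -> dotp u q.1 + c <= q.2) -> closure C p -> dotp u p.1 + c <= p.2.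
Proof.
move=> minor cp; rewrite leNgt; apply/negP => gap.
pose g := dotp u p.1 + c - p.2.
pose e := g / (2 * (l1 u + 1)).
have L1u := l1_ge0 u.
have e0 : 0 < e by rewrite divr_gt0 ?subr_gt0 // mulr_gt0 // ltr_pwDr.
have he : l1 u * e + e = g / 2 by rewrite /e; field; rewrite gt_eqF // ltr_pwDr.
have [q [Cq []]] := cp _ (nbhsx_ballx p e e0); rewrite -!ball_normE /= => b1 b2.
have hd : `|dotp u (q.1 - p.1)| <= l1 u * e.
  apply: dotp_le_l1 => i; apply/ltW/(le_lt_trans _ b1).
  by have := entry_le_mx_norm (p.1 - q.1) 0 i; rewrite !mxE distrC.
move: b2 hd (minor q Cq); rewrite dotpBr ler_norml ltr_norml.
by move=> /andP [? ?] /andP [? ?]; rewrite /g in he; lra.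
Qed.

End Approximation.

Section AffineHull.
Variables (R : realType) (n : nat).

Lemma aff_affine (O : set 'rV[R]_n) : affine_set (aff O).
Proof. by move=> x y t Ax Ay B AB; case: (AB) => aB _; apply: aB; [exact: Ax | exact: Ay]. Qed.

Lemma sub_aff (O : set 'rV[R]_n) : O `<=` aff O.
Proof. by move=> x Ox B [_ OB]; apply: OB. Qed.

Variables (A : set 'rV[R]_n) (y : 'rV[R]_n).
Hypotheses (affA : affine_set A) (Ay : A y).

Lemma affine_dirZ v (c : R) : A (y + v) -> A (y + c *: v).
Proof.
by move=> Av; have := affA c Ay Av; rewrite scalerDr scalerBl scale1r addrA subrK.
Qed.

Lemma affine_dirD v v' : A (y + v) -> A (y + v') -> A (y + (v + v')).
Proof.
move=> Av Av'; have Amid : A (y + 2^-1 *: (v + v')).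
  suff -> : y + 2^-1 *: (v + v') = (1 - 2^-1) *: (y + v) + 2^-1 *: (y + v').
    exact: affA.
  by apply/rowP => i; rewrite !mxE; field.
by have := affine_dirZ 2 Amid; rewrite scalerA mulfV ?scale1r.
Qed.

Lemma affine_dir_mulmx (k : nat) (c : 'rV[R]_k) (B : 'M[R]_(k, n)) :
  (forall i, A (y + row i B)) -> A (y + c *m B).
Proof.
move=> rowsB; rewrite mulmx_sum_row; elim/big_ind: _ => [|u v|i _].
- by rewrite addr0.
- exact: affine_dirD.
- exact: affine_dirZ.
Qed.

(* A square matrix whose rows are directions of A and span all of them
   (take a family of directions of maximal rank). *)
Lemma affine_basis :
  exists B : 'M[R]_n, (forall i, A (y + row i B)) /\
    forall v, A (y + v) -> (v <= B)%MS.
Proof.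
pose P k := `[< exists B : 'M[R]_n, (forall i, A (y + row i B)) /\ \rank B = k >].
have P0 : exists k, P k.
  by exists 0%N; apply/asboolP; exists 0; split => [i|]; rewrite ?mxrank0 ?row0 ?addr0.
have Pn k : P k -> (k <= n)%N by move=> /asboolP [B [_ <-]]; exact: rank_leq_col.
case: (ex_maxnP P0 Pn) => k /asboolP [B [rowsB rkB]] kmax.
exists B; split => // v Av; apply/negPn/negP => vB.
pose B' := <<col_mx B v>>%MS.
have PB' : P (\rank B').
  apply/asboolP; exists B'; split => // i.
  have := row_sub i B'; rewrite genmxE => /submxP [c ->].
  rewrite -(hsubmxK c) mul_row_col; apply: affine_dirD.
    exact: affine_dir_mulmx.
  by rewrite [rsubmx c]mx11_scalar mul_scalar_mx; exact: affine_dirZ.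
have BB' : (B < col_mx B v)%MS.
  by rewrite ltmxE -addsmxE addsmxSl /= col_mx_sub submx_refl.
have := kmax _ PB'; rewrite genmxE -rkB => le_rk.
by have := leq_ltn_trans le_rk (rank_ltmx BB'); rewrite ltnn.
Qed.

Lemma affine_diff_sub (B : 'M[R]_n) a b :
  (forall v, A (y + v) -> (v <= B)%MS) -> A a -> A b -> (a - b <= B)%MS.
Proof.
move=> spanB Aa Ab; apply: spanB.
have -> : a - b = (a - y) + (-1) *: (b - y) by rewrite scaleN1r opprB addrA subrK.
by apply: affine_dirD; last apply: affine_dirZ; rewrite addrC subrK.
Qed.

End AffineHull.

(* A segment-closed set meeting every open orthant around x0 of the
   coordinate system given by the rows of B contains x0: combining the two
   orthants that differ in one coordinate kills that coordinate, and after
   k such steps all coordinates are zero. *)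
Lemma mem_of_orthants (R : realType) (n k : nat) (D : set 'rV[R]_n)
    (x0 : 'rV[R]_n) (B : 'M[R]_(k, n)) :
  segment_closed D ->
  (forall eps : 'I_k -> bool, exists c : 'rV[R]_k, D (x0 + c *m B) /\
     forall i, if eps i then 0 < c 0 i else c 0 i < 0) ->
  D x0.
Proof.
move=> segD orth.
suff killed : forall j, (j <= k)%N -> forall eps : 'I_k -> bool,
    exists c : 'rV[R]_k, D (x0 + c *m B) /\ (forall i : 'I_k, (i < j)%N -> c 0 i = 0) /\
    forall i : 'I_k, (j <= i)%N -> if eps i then 0 < c 0 i else c 0 i < 0.
  have [c [Dc [c0 _]]] := killed k (leqnn k) (fun _ => true).
  have c00 : c = 0 by apply/rowP => i; rewrite mxE c0.
  by rewrite c00 mul0mx addr0 in Dc.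
elim => [_ eps|j IH jk eps]; first by have [c [Dc sc]] := orth eps; exists c.
pose jj : 'I_k := Ordinal jk.
have [cp [Dp [p0 ps]]] := IH (ltnW jk) (fun i => if i == jj then true else eps i).
have [cm [Dm [m0 ms]]] := IH (ltnW jk) (fun i => if i == jj then false else eps i).
have := ps jj (leqnn j); have := ms jj (leqnn j); rewrite eqxx /= => hm hp.
pose t := - cm 0 jj / (cp 0 jj - cm 0 jj).
have pm : 0 < cp 0 jj - cm 0 jj by rewrite subr_gt0 (lt_trans hm hp).
have t0 : 0 <= t by rewrite divr_ge0 // ?oppr_ge0 ?ltW.
have t1 : t <= 1 by rewrite ler_pdivrMr //; lra.
exists (t *: cp + (1 - t) *: cm); split; last split.
- have := segD _ _ t t0 t1 Dp Dm; congr D.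
  rewrite mulmxDl -!scalemxAl !scalerDr addrACA -scalerDl.
  by rewrite (_ : t + (1 - t) = 1) ?scale1r //; lra.
- move=> i; rewrite ltnS leq_eqVlt => /orP [/eqP ij|ij].
    rewrite (_ : i = jj); last exact: val_inj.
    by rewrite !mxE /t; field; rewrite gt_eqF.
  by rewrite !mxE p0 // m0 // !mulr0 addr0.
- move=> i ji.
  have ij : (i == jj) = false by apply/negP => /eqP ij; rewrite ij /= ltnn in ji.
  have := ps i (ltnW ji); have := ms i (ltnW ji); rewrite ij !mxE.
  by case: (eps i) => h1 h2; nra.
Qed.

Section RelativeInterior.
Variables (R : realType) (n : nat) (D O : set 'rV[R]_n).
Hypotheses (segD : segment_closed D) (DO : D `<=` O) (OD : O `<=` closure D).

(* If O is squeezed between a convex set D and its closure, then a point y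
   whose l1 neighbourhood relative to aff O lies in O already lies in D:
   probe every orthant around y along a basis of directions of aff O by a
   point of O, approximate these probes by points of D without leaving the
   orthants, and conclude with [mem_of_orthants]. *)
Lemma ri_core_mem y (d : R) : 0 < d ->
  (forall z, aff O z -> l1 (z - y) < d -> O z) -> aff O y -> D y.
Proof.
move=> d0 ballO Ay.
have affO : affine_set (aff O) := @aff_affine _ _ O.
have [B [rowsB spanB]] := affine_basis affO Ay.
pose M := \sum_i l1 (row i B) + 1.
have M0 : 0 < M by rewrite ltr_pwDr // sumr_ge0 // => i _; exact: l1_ge0.
pose r := d / (2 * M).
have r0 : 0 < r by rewrite divr_gt0 // mulr_gt0.
apply: (mem_of_orthants segD (B := B)) => eps.
pose s : 'rV[R]_n := \row_i (if eps i then r else - r).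
pose ye := y + s *m B.
have Aye : aff O ye by apply: affine_dir_mulmx.
have Oye : O ye.
  apply: (ballO _ Aye); rewrite /ye addrC addKr.
  have : l1 (s *m B) <= r * \sum_i l1 (row i B).
    by apply: l1_mulmx_le => i; rewrite mxE; case: (eps i); rewrite ?normrN gtr0_norm.
  have : r * M = d / 2 by rewrite /r; field; rewrite gt_eqF.
  rewrite /M mulrDr mulr1; lra.
pose e := r / (`|pinvmx B| + 1).
have e0 : 0 < e by rewrite divr_gt0 // ltr_pwDr.
have [q [Dq qye]] := closure_approx_l1 (OD Oye) e0.
have qB : (q - ye <= B)%MS.
  by apply: (affine_diff_sub affO Ay) => //; apply: sub_aff; exact: DO.
exists (s + (q - ye) *m pinvmx B); split.
  by rewrite mulmxDl mulmxKpV // addrA -/ye addrC subrK.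
move=> i; have small : `|((q - ye) *m pinvmx B) 0 i| < r.
  have qyeP : l1 (q - ye) * (`|pinvmx B| + 1) < r by rewrite -ltr_pdivlMr // ltr_pwDr.
  apply: le_lt_trans (mulmx_coord_le (q - ye) (pinvmx B) i) (le_lt_trans _ qyeP).
  by rewrite ler_wpM2l ?l1_ge0 // lerDl.
move: small; rewrite ltr_norml !mxE => /andP [? ?].
by case: (eps i); lra.
Qed.

Lemma ri_radial y (d : R) : 0 < d ->
  (forall z, aff O z -> l1 (z - y) < d -> O z) -> aff O y ->
  forall x, D x -> exists s, 0 < s /\
    forall s', 0 < s' -> s' <= s -> D (y + s' *: (y - x)).
Proof.
move=> d0 ballO Ay x Dx.
have L0 := l1_ge0 (y - x).
pose s := d / (2 * (l1 (y - x) + 1)).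
have s0 : 0 < s by rewrite divr_gt0 // mulr_gt0 // ltr_pwDr.
have sL : s * (l1 (y - x) + 1) = d / 2 by rewrite /s; field; rewrite gt_eqF // ltr_pwDr.
exists s; split => // s' s'0 s's.
apply: (@ri_core_mem _ (d / 2)); first by rewrite divr_gt0.
  move=> z Az hz; apply: ballO => //.
  have -> : z - y = (z - (y + s' *: (y - x))) + s' *: (y - x).
    by rewrite opprD addrA subrK.
  apply: le_lt_trans (l1D _ _) _; rewrite l1Z gtr0_norm //.
  have : s' * l1 (y - x) <= s * l1 (y - x) by rewrite ler_wpM2r.
  nra.
rewrite (_ : y + s' *: (y - x) = (1 - (- s')) *: y + (- s') *: x); last first.
  by apply/rowP => i; rewrite !mxE; ring.
by apply: aff_affine => //; apply: sub_aff; exact: DO.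
Qed.

End RelativeInterior.

(* The slope comparison behind the one-dimensional Hahn-Banach step: if the
   combination of X and Y that annihilates the coordinates a > 0 and b < 0
   is nonnegative, then Y / b <= X / a. *)
Lemma slope_le_of_comb (R : realType) (a b X Y : R) :
  0 < a -> b < 0 -> 0 <= (- b / (a - b)) * X + (1 - (- b / (a - b))) * Y ->
  Y / b <= X / a.
Proof.
move=> a0 b0 comb.
have ab : 0 < a - b by lra.
have E : 1 - (- b / (a - b)) = a / (a - b) by field; rewrite gt_eqF.
rewrite E in comb.
have H2 : 0 <= - b * X + a * Y.
  have := mulr_ge0 comb (ltW ab).
  have -> : (- b / (a - b) * X + a / (a - b) * Y) * (a - b) = - b * X + a * Y.
    by field; rewrite gt_eqF.
  by [].
have P : 0 < (- b^-1) * a^-1.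
  by apply: mulr_gt0; rewrite ?oppr_gt0 ?invr_lt0 ?invr_gt0.
have := mulr_ge0 H2 (ltW P).
have -> : (- b * X + a * Y) * (- b^-1 * a^-1) = X / a - Y / b.
  have an : a != 0 by rewrite gt_eqF.
  have bn : b != 0 by rewrite lt_eqF.
  by field; rewrite an bn.
by rewrite subr_ge0.
Qed.

Section Separation.
Variables (R : realType) (n : nat) (K : set ('rV[R]_n * R)) (m : R).

Hypotheses (segK : segment_closed K) (axisK : forall l, K (0, l) -> m <= l)
  (radialK : forall p, K p -> exists s, 0 < s /\ exists l, K (- (s *: p.1), l)).

Definition vanish_from (j : nat) (x : 'rV[R]_n) :=
  forall i : 'I_n, (j <= i)%N -> x 0 i = 0.

Section Step.
Variables (j : nat) (jn : (j < n)%N) (y : 'rV[R]_n).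
Hypothesis sep_y : forall p, K p -> vanish_from j p.1 -> m + dotp y p.1 <= p.2.

Let jj : 'I_n := Ordinal jn.
Let S p := K p /\ vanish_from j.+1 p.1.
Let gap (p : 'rV[R]_n * R) := p.2 - m - dotp y p.1.

(* Combining a point with positive j-th coordinate and one with negative
   j-th coordinate so as to kill it shows that every admissible slope from
   the negative side is below every admissible slope from the positive side. *)
Lemma slope_compare p q : S p -> S q -> 0 < p.1 0 jj -> q.1 0 jj < 0 ->
  gap q / q.1 0 jj <= gap p / p.1 0 jj.
Proof.
move=> [Kp vp] [Kq vq] pj qj; apply: slope_le_of_comb => //.
pose t := - q.1 0 jj / (p.1 0 jj - q.1 0 jj).
have pq : 0 < p.1 0 jj - q.1 0 jj by rewrite subr_gt0 (lt_trans qj pj).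
have t0 : 0 <= t by rewrite /t divr_ge0 // ?oppr_ge0 ?ltW.
have t1 : t <= 1 by rewrite /t ler_pdivrMr //; lra.
have vr : vanish_from j (t *: p + (1 - t) *: q).1.
  move=> i ji; rewrite !mxE; case: (ltngtP j i) ji => // [ji|ij] _.
    by rewrite vp // vq // !mulr0 addr0.
  rewrite (_ : i = jj); last exact: val_inj.
  by rewrite /t; field; rewrite gt_eqF.
have := sep_y (segK t0 t1 Kp Kq) vr.
change ((t *: p + (1 - t) *: q).2) with (t * p.2 + (1 - t) * q.2).
by rewrite /= dotpDr !dotpZr /gap -/t; lra.
Qed.

(* One step of the Hahn-Banach extension: a separating slope on the vectors
   vanishing from j on extends to those vanishing from j + 1 on, by adding
   to the j-th coordinate the supremum of the admissible negative slopes. *)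
Lemma separator_extend :
  exists y', forall p, K p -> vanish_from j.+1 p.1 -> m + dotp y' p.1 <= p.2.
Proof.
pose neg := [set r | exists p, S p /\ p.1 0 jj < 0 /\ r = gap p / p.1 0 jj].
pose c := sup neg.
exists (y + c *: delta_mx 0 jj) => p Kp vp.
rewrite dotpDl dotpZl dotp_delta.
suff : c * p.1 0 jj <= gap p by rewrite /gap; lra.
have [s [s0 [l Kq]]] := radialK Kp.
have Sq : S (- (s *: p.1), l) by split => // i ji /=; rewrite !mxE vp // mulr0 oppr0.
have qj : (- (s *: p.1), l).1 0 jj = - (s * p.1 0 jj) by rewrite /= !mxE.
case: (ltgtP (p.1 0 jj) 0) => [pn|pp|p0].
- have hub : has_ubound neg.
    exists (gap (- (s *: p.1), l) / (- (s *: p.1), l).1 0 jj) => _ [q [Sq' [qn ->]]].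
    by apply: slope_compare; rewrite // qj oppr_gt0 pmulr_rlt0.
  have : gap p / p.1 0 jj <= c by apply: ub_le_sup => //; exists p.
  by rewrite ler_ndivrMr // mulrC.
- have : c <= gap p / p.1 0 jj.
    apply: ge_sup => [|_ [q [Sq' [qn ->]]]]; last exact: slope_compare.
    by exists (gap (- (s *: p.1), l) / (- (s *: p.1), l).1 0 jj);
       exists (- (s *: p.1), l); rewrite qj oppr_lt0 mulr_gt0.
  by rewrite ler_pdivlMr.
- rewrite p0 mulr0 /gap; suff : m + dotp y p.1 <= p.2 by lra.
  apply: sep_y => // i ji; case: (ltngtP j i) ji => // [ji|ij] _; first exact: vp.
  by rewrite (_ : i = jj) //; exact: val_inj.
Qed.

End Step.

(* Finite-dimensional separation: some affine function with value m at the
   origin lies below K.  Induction on the number of coordinates allowed to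
   be nonzero; the base case is the vertical axis. *)
Lemma hb_separation : exists y : 'rV[R]_n, forall p, K p -> m + dotp y p.1 <= p.2.
Proof.
suff sep_j j : (j <= n)%N -> exists y : 'rV_n,
    forall p, K p -> vanish_from j p.1 -> m + dotp y p.1 <= p.2.
  have [y sep] := sep_j n (leqnn n).
  by exists y => p Kp; apply: sep => // i; rewrite leqNgt ltn_ord.
elim: j => [_|j IH jn].
  exists 0 => p Kp v0.
  have p10 : p.1 = 0 by apply/rowP => i; rewrite [RHS]mxE v0.
  rewrite /dotp big1 ?addr0 => [|i _]; last by rewrite mxE mul0r.
  by apply: axisK; rewrite -p10 -surjective_pairing.
by have [y sep] := IH (ltnW jn); exact: (@separator_extend j jn y sep).
Qed.

End Separation.

Section NearlyConvexCores.
Variables (R : realType) (n : nat).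
Implicit Types (f : 'rV[R]_n -> \bar R) (C : set ('rV[R]_n * R)).

Definition proj_set C : set 'rV[R]_n := [set x | exists mu, C (x, mu)].

Definition radial_at (D : set 'rV[R]_n) (x0 : 'rV[R]_n) :=
  forall x, D x -> exists s, 0 < s /\
    forall s', 0 < s' -> s' <= s -> D (x0 + s' *: (x0 - x)).

Lemma proper_fin f x : proper_fun f -> dom f x -> exists r : R, f x = r%:E.
Proof. by move=> [_ /(_ x)]; rewrite /dom /=; case: (f x) => [r| |] // _ _; exists r. Qed.

Lemma proper_le_fin f x (mu : R) : proper_fun f -> (f x <= mu%:E)%E ->
  exists r, f x = r%:E /\ r <= mu.
Proof.
by move=> [_ /(_ x)]; case: (f x) => [r| |] //= _; rewrite lee_fin => ?; exists r.
Qed.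

Lemma nearly_convex_core f : nearly_convex_fun f -> exists C,
  [/\ segment_closed C, forall x mu, C (x, mu) -> (f x <= mu%:E)%E &
      forall x (r : R), f x = r%:E -> closure C (x, r)].
Proof.
move=> [C [cC [Cepi epiC]]]; exists C; split.
- exact: convex_segment_closed.
- by move=> x mu /Cepi.
- by move=> x r fx; apply: epiC; rewrite /epi /= fx.
Qed.

Lemma segment_closed_proj C : segment_closed C -> segment_closed (proj_set C).
Proof.
move=> segC a b t t0 t1 [ma Ca] [mb Cb].
by exists (t * ma + (1 - t) * mb); exact: (segC _ _ _ t0 t1 Ca Cb).
Qed.

Lemma closure_proj C x (mu : R) : closure C (x, mu) -> closure (proj_set C) x.
Proof.
move=> cp B /nbhs_ex [d dB].
have [q [Cq [b1 _]]] := cp _ (nbhsx_ballx (x, mu) d%:num (gt0 d)).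
by exists q.1; split; [exists q.2; rewrite -surjective_pairing | exact: dB].
Qed.

(* The domain of f is squeezed between the projection of a convex core and
   its closure, so a relative interior point of the domain is radial for
   that projection. *)
Lemma ri_radial_core f C x0 : proper_fun f -> segment_closed C ->
  (forall x mu, C (x, mu) -> (f x <= mu%:E)%E) ->
  (forall x (r : R), f x = r%:E -> closure C (x, r)) ->
  ri (dom f) x0 -> radial_at (proj_set C) x0.
Proof.
move=> pf segC Cepi graphC [domx0 [d [d0 ballO]]].
have PD : proj_set C `<=` dom f.
  by move=> x [mu /Cepi fx]; apply: le_lt_trans fx _; rewrite ltry.
have DP : dom f `<=` closure (proj_set C).
  by move=> x /(proper_fin pf) [r /graphC /closure_proj].
apply: (ri_radial (segment_closed_proj segC) PD DP d0); last exact: sub_aff.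
move=> z Az hz; apply: ballO; split => //.
by rewrite /eball /=; apply: le_lt_trans (enorm_le_l1 _) hz.
Qed.

End NearlyConvexCores.

Section SumSeparation.
Variables (R : realType) (n : nat) (C1 C2 : set ('rV[R]_n * R)).
Variables (w x0 : 'rV[R]_n) (m : R).
Hypotheses (seg1 : segment_closed C1) (seg2 : segment_closed C2).
Hypotheses (rad1 : radial_at (proj_set C1) x0) (rad2 : radial_at (proj_set C2) x0).
Hypothesis axis : forall x m1 m2, C1 (x, m1) -> C2 (x, m2) -> m <= m1 + m2 - dotp w x.

(* K satisfies the hypotheses of [hb_separation]; unfolding the separating
   slope y on K gives an affine minorant of (x, m1), (z, m2) |-> m1 + m2
   split between the two sets. *)
Lemma sum_separation : exists y : 'rV[R]_n,
  forall x m1 z m2, C1 (x, m1) -> C2 (z, m2) -> m + dotp (w - y) x + dotp y z <= m1 + m2.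
Proof.
pose K := [set p : 'rV[R]_n * R | exists x m1 z m2,
  [/\ C1 (x, m1), C2 (z, m2) & p = (z - x, m1 + m2 - dotp w x)]].
have segK : segment_closed K.
  move=> _ _ t t0 t1 [x [m1 [z [m2 [Cx Cz ->]]]]] [x' [m1' [z' [m2' [Cx' Cz' ->]]]]].
  exists (t *: x + (1 - t) *: x'), (t * m1 + (1 - t) * m1'),
    (t *: z + (1 - t) *: z'), (t * m2 + (1 - t) * m2'); split.
  - exact: (seg1 t0 t1 Cx Cx').
  - exact: (seg2 t0 t1 Cz Cz').
  - congr pair; first by apply/rowP => i; rewrite !mxE; ring.
    rewrite /= dotpDr !dotpZr.
    change (t * (m1 + m2 - dotp w x) + (1 - t) * (m1' + m2' - dotp w x') =
      t * m1 + (1 - t) * m1' + (t * m2 + (1 - t) * m2') -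
      (t * dotp w x + (1 - t) * dotp w x')); ring.
have axisK l : K (0, l) -> m <= l.
  move=> [x [m1 [z [m2 [Cx Cz [zx ->]]]]]].
  by move/eqP: zx; rewrite eq_sym subr_eq0 => /eqP zx; subst z; exact: axis.
have radialK p : K p -> exists s, 0 < s /\ exists l, K (- (s *: p.1), l).
  move=> [x [m1 [z [m2 [Cx Cz ->]]]]] /=.
  have [s1 [s10 hs1]] := rad1 (ex_intro _ m1 Cx).
  have [s2 [s20 hs2]] := rad2 (ex_intro _ m2 Cz).
  pose s := Num.min s1 s2.
  have s0 : 0 < s by rewrite lt_min s10 s20.
  have ss1 : s <= s1 by rewrite ge_min lexx.
  have ss2 : s <= s2 by rewrite ge_min lexx orbT.
  have [mb Cb] := hs1 s s0 ss1.
  have [ma Ca] := hs2 s s0 ss2.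
  exists s; split => //.
  exists (mb + ma - dotp w (x0 + s *: (x0 - x))).
  exists (x0 + s *: (x0 - x)), mb, (x0 + s *: (x0 - z)), ma; split => //.
  by congr pair; apply/rowP => i; rewrite !mxE; ring.
have [y sepK] := hb_separation segK axisK radialK.
exists y => x m1 z m2 Cx Cz.
have := sepK (z - x, m1 + m2 - dotp w x) (ex_intro _ x (ex_intro _ m1
  (ex_intro _ z (ex_intro _ m2 (And3 Cx Cz erefl))))).
by rewrite /= dotpBr dotpBl; lra.
Qed.

End SumSeparation.

Section Conjugates.
Variables (R : realType) (n : nat).
Implicit Types (f g : 'rV[R]_n -> \bar R).

Lemma fenchel_young_sum f1 f2 (w w1 w2 : 'rV[R]_n) :
  proper_fun f1 -> proper_fun f2 -> w1 + w2 = w ->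
  (fconj (fun x => f1 x + f2 x)%E w <= fconj f1 w1 + fconj f2 w2)%E.
Proof.
move=> [_ pf1] [_ pf2] <-; apply: ge_ereal_sup => _ [x _ <-].
have l1 : ((dotp w1 x)%:E - f1 x <= fconj f1 w1)%E by apply: ereal_sup_ubound; exists x.
have l2 : ((dotp w2 x)%:E - f2 x <= fconj f2 w2)%E by apply: ereal_sup_ubound; exists x.
have := pf1 x; have := pf2 x.
case: (f1 x) l1 => [r1| |] l1 //; case: (f2 x) l2 => [r2| |] l2 // _ _;
  try exact: leNye.
apply: le_trans (leeD l1 l2); rewrite -!EFinB -EFinD lee_fin dotpDl; lra.
Qed.

Lemma closure_sum_minorant (C1 C2 : set ('rV[R]_n * R)) (b : R) (u v : 'rV[R]_n) :
  (forall x m1 z m2, C1 (x, m1) -> C2 (z, m2) -> b + dotp u x + dotp v z <= m1 + m2) ->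
  forall x r1 z r2, closure C1 (x, r1) -> closure C2 (z, r2) ->
    b + dotp u x + dotp v z <= r1 + r2.
Proof.
move=> minor x r1 z r2 cl1 cl2.
have minor1 z' m2 : C2 (z', m2) -> b + dotp u x + dotp v z' <= r1 + m2.
  move=> Cz'; suff : dotp u (x, r1).1 + (b + dotp v z' - m2) <= (x, r1).2 by move=> /=; lra.
  apply: (closure_affine_minorant _ cl1) => -[x' m1] /= Cx'.
  by have := minor _ _ _ _ Cx' Cz'; lra.
suff : dotp v (z, r2).1 + (b + dotp u x - r1) <= (z, r2).2 by move=> /=; lra.
apply: (closure_affine_minorant _ cl2) => -[z' m2] /= Cz'.
by have := minor1 _ _ Cz'; lra.
Qed.

Lemma fconj_sum_le f1 f2 (u v : 'rV[R]_n) (a : R) :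
  proper_fun f1 -> proper_fun f2 ->
  (forall x z r1 r2, f1 x = r1%:E -> f2 z = r2%:E ->
     dotp u x - r1 + (dotp v z - r2) <= a) ->
  (fconj f1 u + fconj f2 v <= a%:E)%E.
Proof.
move=> pf1 pf2 bound.
have [[x1 dx1] _] := pf1; have [[z2 dz2] _] := pf2.
have [r1 E1] := proper_fin pf1 dx1; have [r2 E2] := proper_fin pf2 dz2.
have conj1_le z r : f2 z = r%:E -> (fconj f1 u <= (a - (dotp v z - r))%:E)%E.
  move=> Ez; apply: ge_ereal_sup => _ [x _ <-].
  have := pf1.2 x; case Ex : (f1 x) => [r'| |] // _; last exact: leNye.
  by rewrite -EFinB lee_fin; have := bound _ _ _ _ Ex Ez; lra.
have [s1 Es1] : exists s1, fconj f1 u = s1%:E.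
  have low : ((dotp u x1)%:E - f1 x1 <= fconj f1 u)%E.
    by apply: ereal_sup_ubound; exists x1.
  rewrite E1 in low.
  by case: (fconj f1 u) (conj1_le _ _ E2) low => [s| |] // _ _; exists s.
have conj2_le : (fconj f2 v <= (a - s1)%:E)%E.
  apply: ge_ereal_sup => _ [z _ <-].
  have := pf2.2 z; case Ez : (f2 z) => [r| |] // _; last exact: leNye.
  by have := conj1_le _ _ Ez; rewrite Es1 -EFinB !lee_fin; lra.
by rewrite Es1; apply: le_trans (leeD2l _ conj2_le) _; rewrite -EFinD lee_fin; lra.
Qed.

Lemma conj_sum_attained f1 f2 (w : 'rV[R]_n) (a : R) :
  proper_fun f1 -> proper_fun f2 -> nearly_convex_fun f1 -> nearly_convex_fun f2 ->
  ri (dom f1) `&` ri (dom f2) !=set0 ->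
  (fconj (fun x => f1 x + f2 x)%E w <= a%:E)%E ->
  exists w1 w2, w = w1 + w2 /\ (fconj f1 w1 + fconj f2 w2 <= a%:E)%E.
Proof.
move=> pf1 pf2 nc1 nc2 [x0 [ri1 ri2]] conj_le.
have [C1 [seg1 epi1 graph1]] := nearly_convex_core nc1.
have [C2 [seg2 epi2 graph2]] := nearly_convex_core nc2.
have rad1 := ri_radial_core pf1 seg1 epi1 graph1 ri1.
have rad2 := ri_radial_core pf2 seg2 epi2 graph2 ri2.
have axis x m1 m2 : C1 (x, m1) -> C2 (x, m2) -> - a <= m1 + m2 - dotp w x.
  move=> /epi1 /(proper_le_fin pf1) [r1 [E1 h1]] /epi2 /(proper_le_fin pf2) [r2 [E2 h2]].
  have : ((dotp w x)%:E - (f1 x + f2 x) <= a%:E)%E.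
    by apply: le_trans conj_le; apply: ereal_sup_ubound; exists x.
  by rewrite E1 E2 -EFinD lee_fin; lra.
have [y sep] := sum_separation seg1 seg2 rad1 rad2 axis.
exists (w - y), y; split; first by rewrite subrK.
apply: fconj_sum_le => // x z r1 r2 E1 E2.
by have := closure_sum_minorant sep (graph1 _ _ E1) (graph2 _ _ E2); lra.
Qed.

End Conjugates.

Theorem theorem6p6 (R : realType) (n : nat) (f1 f2 : 'rV[R]_n -> \bar R) :
  proper_fun f1 -> proper_fun f2 ->
  nearly_convex_fun f1 -> nearly_convex_fun f2 ->
  ri (dom f1) `&` ri (dom f2) !=set0 ->
  forall w : 'rV[R]_n,
    fconj (fun x => (f1 x + f2 x)%E) w = infconv (fconj f1) (fconj f2) w /\
    (fconj (fun x => (f1 x + f2 x)%E) w \is a fin_num ->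
     exists w1 w2 : 'rV[R]_n, w = w1 + w2 /\
       fconj (fun x => (f1 x + f2 x)%E) w = (fconj f1 w1 + fconj f2 w2)%E).
Proof.
move=> pf1 pf2 nc1 nc2 hri w.
set F := fconj (fun x => (f1 x + f2 x)%E) w.
have le_inf : (F <= infconv (fconj f1) (fconj f2) w)%E.
  by apply: le_ereal_inf_tmp => _ [[u v] /= uv <-]; exact: fenchel_young_sum.
have F_gt : (-oo < F)%E.
  have [x0 [[dom1 _] [dom2 _]]] := hri.
  have [r1 E1] := proper_fin pf1 dom1; have [r2 E2] := proper_fin pf2 dom2.
  apply: lt_le_trans (ereal_sup_ubound (ex_intro2 _ _ x0 I erefl)).
  by rewrite E1 E2 -EFinD ltNyr.
have [[a Fa] | Fpinf] : (exists a, F = a%:E) \/ F = +oo%E.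
  by case: (F) F_gt => [a| |] // _; [left; exists a | right].
- have F_le : (F <= a%:E)%E by rewrite Fa.
  have [w1 [w2 [ew le_a]]] := conj_sum_attained pf1 pf2 nc1 nc2 hri F_le.
  have F_eq : F = (fconj f1 w1 + fconj f2 w2)%E.
    by apply/le_anti; rewrite fenchel_young_sum ?ew //= Fa le_a.
  have inf_le : (infconv (fconj f1) (fconj f2) w <= F)%E.
    by rewrite F_eq; apply: ereal_inf_lbound; exists (w1, w2).
  by split; [apply/le_anti; rewrite le_inf inf_le | exists w1, w2].
- by split; [apply/le_anti; rewrite le_inf Fpinf leey | rewrite Fpinf].
Qed.
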